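(* Let $\alpha\in(0,1)$, $R>0$, and consider the initial state $(x_O,y_O,y_T)$ at time $0$ of the observer–target system. Let $m=\sqrt{1-\alpha^2}/\alpha$ and let $W=(x_O,y_O-R)$ be the bottom point of the observation disk. If $W$ lies on or above the Decision Line, i.e. $y_O-R-y_T\ge m|x_O|$, then the optimal observation time equals $\frac{2R}{1-\alpha}$ (the state belongs to $\mathscr B_3$).
   Context: Target: position $(0,y_T(t))$, $\dot y_T=1$, $y_T(0)=y_T$. Observer: position $(x_O(t),y_O(t))$ starting at $(x_O,y_O)$, $\dot x_O=\alpha\cos\psi(t)$, $\dot y_O=\alpha\sin\psi(t)$, heading $\psi:[0,\infty)\to\mathbb R$ a measurable control. Observation disk: closed disk of radius $R$ centered at the observer. For a control, $t_2=\inf\{t\ge0:x_O(t)^2+(y_O(t)-y_T(t))^2\le R^2\}$ (contact time), $t_f=\inf\{t\ge t_2:x_O(t)^2+(y_O(t)-y_T(t))^2>R^2\}$, and the observation time is $t_{\text{obs}}=t_f-t_2$ (taken to be $0$ if no contact occurs). The optimal observation time is the supremum of $t_{\text{obs}}$ over all controls. The Decision Line is the union of the two rays $\{(\pm s\alpha,\,y_T+s\sqrt{1-\alpha^2}):s\ge0\}$ from the initial target position, i.e. the set of points $Z$ whose Apollonius circle $\{P:|PZ|=\alpha|PT|\}$ with the target $T$ is tangent to the target's path; ''on or above'' it means in the region $\{(x,y):y-y_T\ge m|x|\}$. $\mathscr B_3$ denotes the set of states whose optimal observation time equals $2R/(1-\alpha)$. *)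

From HB Require Import structures.
From mathcomp Require Import all_boot all_order all_algebra.
From mathcomp Require Import all_classical all_reals all_analysis.
Set Implicit Arguments. Unset Strict Implicit. Unset Printing Implicit Defensive.
Import Order.TTheory GRing.Theory Num.Theory.
Local Open Scope classical_set_scope.
Local Open Scope ring_scope.

Section ObserverTarget.
Variable R : realType.

Definition obsX (alpha xO : R) (psi : R -> R) (t : R) : R :=
  xO + Rintegral (@lebesgue_measure R) `[0, t] (fun s => alpha * cos (psi s)).
Definition obsY (alpha yO : R) (psi : R -> R) (t : R) : R :=
  yO + Rintegral (@lebesgue_measure R) `[0, t] (fun s => alpha * sin (psi s)).
(* Target position (0, yT + t). *)
Definition targY (yT t : R) : R := yT + t.

Definition in_disk (alpha r xO yO yT : R) (psi : R -> R) (t : R) : Prop :=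
  (obsX alpha xO psi t) ^+ 2 + (obsY alpha yO psi t - targY yT t) ^+ 2 <= r ^+ 2.

Definition contact_time (alpha r xO yO yT : R) (psi : R -> R) : \bar R :=
  ereal_inf [set t%:E | t in [set t : R | 0 <= t /\ in_disk alpha r xO yO yT psi t]].

Definition exit_time (alpha r xO yO yT : R) (psi : R -> R) : \bar R :=
  ereal_inf [set t%:E | t in [set t : R |
    (contact_time alpha r xO yO yT psi <= t%:E)%E /\ ~ in_disk alpha r xO yO yT psi t]].

Definition obs_time (alpha r xO yO yT : R) (psi : R -> R) : \bar R :=
  if contact_time alpha r xO yO yT psi == +oo%E then 0%E
  else (exit_time alpha r xO yO yT psi - contact_time alpha r xO yO yT psi)%E.

Definition admissible (psi : R -> R) : Prop :=
  measurable_fun [set t : R | 0 <= t] psi.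

Definition optimal_obs_time (alpha r xO yO yT : R) : \bar R :=
  ereal_sup [set obs_time alpha r xO yO yT psi | psi in admissible].

End ObserverTarget.

From HB Require Import structures.
From mathcomp Require Import all_boot all_order all_algebra.
From mathcomp Require Import all_classical all_reals all_analysis.
From mathcomp Require Import ring lra measurable_realfun.
Set Implicit Arguments. Unset Strict Implicit. Unset Printing Implicit Defensive.
Import Order.TTheory GRing.Theory Num.Theory.
Local Open Scope classical_set_scope.
Local Open Scope ring_scope.

(* Whatever the heading, the vertical coordinate of the observer relative to
   the target decreases at speed at least 1 - alpha, so once the target is in
   the disk it has crossed the whole diameter 2r, and left, within time
   2r / (1 - alpha).  Conversely, steer with heading th, sin th = alpha: the
   relative velocity is then parallel to the Decision Line, so when the bottom
   point W starts on or above that line the target stays out of the disk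
   until the observer is directly above it.  Heading due north from then on,
   the target enters the disk at its bottom point and leaves at its top with
   relative speed exactly 1 - alpha. *)

Lemma normr_le_of_sqrD_le (R : realFieldType) (r x y : R) :
  0 <= r -> x ^+ 2 + y ^+ 2 <= r ^+ 2 -> `|y| <= r.
Proof.
move=> r0 xy_le; have x2 : 0 <= x ^+ 2 by exact: sqr_ge0.
have lo : - r <= y by nra.
have hi : y <= r by nra.
by rewrite ler_norml lo hi.
Qed.

Section Integration.
Variable R : realType.
Local Notation mu := (@lebesgue_measure R).

Lemma integrable_bounded (A : set R) (f : R -> R) (M : R) : measurable A ->
  (mu A < +oo)%E -> measurable_fun A f -> (forall x, A x -> `|f x| <= M) ->
  mu.-integrable A (EFin \o f).
Proof.
move=> mA Afin mf fM; apply: measurable_bounded_integrable => //.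
apply: (@sub_boundedl _ _ _ _ (fun _ => M)); last exact: bounded_cst.
by move=> x Ax /=; apply: le_trans (fM x Ax) (ler_norm M).
Qed.

Lemma lebesgue_measure_itv_lty (a b : R) bl br :
  (mu [set` Interval (BSide bl a) (BSide br b)] < +oo)%E.
Proof. by rewrite lebesgue_measure_itv; case: ifP => // _; rewrite /= -EFinD ltry. Qed.

Lemma fine_lebesgue_measure_itv (a b : R) bl br : a <= b ->
  fine (mu [set` Interval (BSide bl a) (BSide br b)]) = b - a.
Proof.
move=> ab; rewrite lebesgue_measure_itv /=.
have [<-|ab'] := eqVneq a b; first by case: ifP; rewrite /= subrr.
by rewrite ifT //= lte_fin lt_neqAle ab' ab.
Qed.

Lemma Rintegral_cst_itv (c a b : R) bl br : a <= b ->
  Rintegral mu [set` Interval (BSide bl a) (BSide br b)] (fun=> c) = c * (b - a).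
Proof. by move=> ab; rewrite Rintegral_cst ?fine_lebesgue_measure_itv. Qed.

Lemma Rintegral_step (a b tau t : R) : 0 <= tau -> 0 <= t ->
  Rintegral mu `[0, t] (fun s => if s <= tau then a else b) =
  if t <= tau then a * t else a * tau + b * (t - tau).
Proof.
move=> tau0 t0; set f := fun s => if s <= tau then a else b.
case: (leP t tau) => [t_tau|tau_t].
  rewrite (@eq_Rintegral _ _ _ mu _ (fun=> a)) ?Rintegral_cst_itv ?subr0 //.
  by move=> x; rewrite inE /= in_itv /= => /andP[_ xt]; rewrite /f (le_trans xt).
have f_int : mu.-integrable `[0, t] (EFin \o f).
  apply: (@integrable_bounded _ _ (`|a| + `|b|)) => //.
  - exact: lebesgue_measure_itv_lty.
  - by apply: measurable_funS (measurable_fun_ifT _ _ _) => //; apply: measurable_fun_ler.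
  - by move=> x _; rewrite /f; case: ifP => _; rewrite ?lerDl ?lerDr.
rewrite -[LHS](subrK (Rintegral mu `[0, tau] f)).
rewrite Rintegral_itvB ?bnd_simp ?(ltW tau_t) //.
rewrite (@eq_Rintegral _ _ _ mu _ (fun=> b)); last first.
  by move=> x; rewrite inE /= in_itv /= => /andP[taux _]; rewrite /f leNgt taux.
rewrite (@eq_Rintegral _ _ _ mu `[0, tau] (fun=> a)); last first.
  by move=> x; rewrite inE /= in_itv /= => /andP[_ ->].
by rewrite !Rintegral_cst_itv ?(ltW tau_t) // subr0 addrC.
Qed.

End Integration.

Section Motion.
Import numFieldNormedType.Exports.
Variable R : realType.
Local Notation mu := (@lebesgue_measure R).

Lemma integrable_heading (alpha : R) (g psi : R -> R) (A : set R) :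
  measurable A -> (mu A < +oo)%E -> A `<=` [set x | 0 <= x] ->
  continuous g -> (forall x, `|g x| <= 1) -> admissible psi ->
  mu.-integrable A (EFin \o (fun s => alpha * g (psi s))).
Proof.
move=> mA Afin A_ge0 g_cont g_le1 psi_meas.
apply: (@integrable_bounded _ _ _ `|alpha|) => //.
  apply: measurable_funM; first exact: measurable_cst.
  apply: measurableT_comp; first exact: continuous_measurable_fun.
  by apply: measurable_funS psi_meas => //; rewrite -set_itvcy.
by move=> x _; rewrite normrM -[leRHS]mulr1 ler_wpM2l.
Qed.

Lemma obsY_sub_le (alpha yO : R) (psi : R -> R) (s t : R) :
  0 <= alpha -> admissible psi -> 0 <= s -> s <= t ->
  obsY alpha yO psi t - obsY alpha yO psi s <= alpha * (t - s).
Proof.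
move=> alpha0 psi_meas s0 st.
have sin_int (c : bool) (u : R) : 0 <= u ->
    mu.-integrable [set` Interval (BSide c u) (BRight t)]
      (EFin \o (fun x => alpha * sin (psi x))).
  move=> u0; apply: integrable_heading => //.
  - exact: lebesgue_measure_itv_lty.
  - move=> x /=; rewrite in_itv /= => /andP[+ _].
    by case: c => /= ux; [exact: le_trans ux | exact: le_trans (ltW ux)].
  - exact: continuous_sin.
  - by move=> x; rewrite ler_norml sin_geN1 sin_le1.
rewrite /obsY opprD addrACA subrr add0r Rintegral_itvB ?bnd_simp ?sin_int //.
rewrite -(Rintegral_cst_itv alpha false false st).
apply: le_Rintegral => //; first exact: sin_int.
- apply: (@integrable_bounded _ _ _ `|alpha|) => //; first exact: lebesgue_measure_itv_lty.
- by move=> x _ /=; rewrite -[leRHS]mulr1 ler_wpM2l ?sin_le1.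
Qed.

End Motion.

Section ObservationTime.
Variables (R : realType) (alpha r xO yO yT : R) (psi : R -> R).
Local Notation in_disk := (in_disk alpha r xO yO yT psi).
Local Notation contact_time := (contact_time alpha r xO yO yT psi).
Local Notation exit_time := (exit_time alpha r xO yO yT psi).
Local Notation obs_time := (obs_time alpha r xO yO yT psi).

Lemma contact_time_ge0 : (0 <= contact_time)%E.
Proof. by apply: le_ereal_inf_tmp => _ [t [t0 _] <-]; rewrite lee_fin. Qed.

Lemma contact_time_le (s : R) : 0 <= s -> in_disk s -> (contact_time <= s%:E)%E.
Proof. by move=> s0 ins; apply: ereal_inf_lbound; exists s. Qed.

Lemma contact_timeE (ts : R) : 0 <= ts -> in_disk ts ->
  (forall t, 0 <= t -> t < ts -> ~ in_disk t) -> contact_time = ts%:E.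
Proof.
move=> ts0 in_ts out_before; apply/eqP; rewrite eq_le contact_time_le //=.
apply: le_ereal_inf_tmp => _ [t [t0 in_t] <-]; rewrite lee_fin leNgt.
by apply/negP => /(out_before _ t0).
Qed.

Lemma exit_time_le (c D : R) : 0 <= D -> contact_time = c%:E ->
  (forall s t, 0 <= s -> in_disk s -> s + D < t -> ~ in_disk t) ->
  (exit_time <= (c + D)%:E)%E.
Proof.
move=> D0 tcE escape; apply/lee_addgt0Pr => e e0.
have e20 : 0 < e / 2 by rewrite divr_gt0.
have tc_fin : contact_time \is a fin_num by rewrite tcE.
have [_ [s [s0 in_s] <-]] := lb_ereal_inf_adherent e20 tc_fin.
rewrite -/contact_time tcE -EFinD lte_fin => s_lt.
have c_le_s : c <= s by rewrite -lee_fin -tcE contact_time_le.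
apply: (@le_trans _ _ (s + D + e / 2)%:E).
  apply: ereal_inf_lbound; exists (s + D + e / 2) => //; split.
    by rewrite tcE lee_fin; lra.
  by apply: (escape s) => //; lra.
by rewrite -EFinD lee_fin; lra.
Qed.

Lemma obs_time_le (D : R) : 0 <= D ->
  (forall s t, 0 <= s -> in_disk s -> s + D < t -> ~ in_disk t) ->
  (obs_time <= D%:E)%E.
Proof.
move=> D0 escape; rewrite /obs_time; case: ifP => [_|/negbT tc_fin].
  by rewrite lee_fin.
have [c tcE] : exists c, contact_time = c%:E.
  by move: contact_time_ge0 tc_fin; case: contact_time => [c| |] //; exists c.
have := exit_time_le D0 tcE escape; rewrite tcE.
case: exit_time => [x| |] //=; last by move=> _; exact: leNye.
by rewrite -EFinD !lee_fin; lra.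
Qed.

Lemma obs_time_ge (ts D : R) : 0 <= ts -> in_disk ts ->
  (forall t, 0 <= t -> t < ts -> ~ in_disk t) ->
  (forall t, ts <= t <= ts + D -> in_disk t) ->
  (D%:E <= obs_time)%E.
Proof.
move=> ts0 in_ts out_before in_after.
have tcE := contact_timeE ts0 in_ts out_before.
have : ((ts + D)%:E <= exit_time)%E.
  apply: le_ereal_inf_tmp => _ [t [ts_t out_t] <-]; rewrite lee_fin.
  rewrite tcE lee_fin in ts_t; rewrite leNgt; apply/negP => t_lt.
  by apply/out_t/in_after; rewrite ts_t ltW.
rewrite /obs_time tcE /=; case: exit_time => [x| |] //=; last by move=> _; exact: leey.
by rewrite -EFinD !lee_fin; lra.
Qed.

End ObservationTime.

Section UpperBound.
Variables (R : realType) (alpha r xO yO yT : R).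
Hypotheses (alpha_gt0 : 0 < alpha) (alpha_lt1 : alpha < 1) (r_gt0 : 0 < r).

Lemma not_in_disk_after_crossing (psi : R -> R) (s t : R) : admissible psi -> 0 <= s ->
  in_disk alpha r xO yO yT psi s -> s + 2 * r / (1 - alpha) < t ->
  ~ in_disk alpha r xO yO yT psi t.
Proof.
rewrite /in_disk /targY => psi_meas s0 /(normr_le_of_sqrD_le (ltW r_gt0)) in_s late
  /(normr_le_of_sqrD_le (ltW r_gt0)) in_t.
have alpha_lt1' : 0 < 1 - alpha by rewrite subr_gt0.
have gap : 2 * r < (1 - alpha) * (t - s).
  by rewrite [_ * (t - s)]mulrC -ltr_pdivrMr // ltrBrDl.
have st : s <= t.
  by rewrite -subr_ge0 ltW // -(pmulr_rgt0 _ alpha_lt1') (lt_trans _ gap) // mulr_gt0.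
have := obsY_sub_le yO (ltW alpha_gt0) psi_meas s0 st.
move: in_s in_t; rewrite !ler_norml => /andP[_ ?] /andP[? _].
lra.
Qed.

Lemma obs_time_le_crossing (psi : R -> R) : admissible psi ->
  (obs_time alpha r xO yO yT psi <= (2 * r / (1 - alpha))%:E)%E.
Proof.
move=> psi_meas; apply: obs_time_le => [|s t s0]; last exact: not_in_disk_after_crossing.
by rewrite divr_ge0 ?subr_ge0 ?mulr_ge0 // ltW.
Qed.

End UpperBound.

Lemma exists_cos_sin (R : realType) (c s : R) :
  c ^+ 2 + s ^+ 2 = 1 -> 0 <= s -> exists th, cos th = c /\ sin th = s.
Proof.
move=> cs1 s0; have c_itv : -1 <= c <= 1.
  by rewrite -ler_norml (normr_le_of_sqrD_le ler01 (x := s)) // expr1n addrC cs1.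
exists (acos c); split; first by rewrite acosK // in_itv.
by rewrite sin_acos // -cs1 addrC addKr sqrtr_sqr ger0_norm.
Qed.

Section NorthboundStrategy.
Variables (R : realType) (alpha r xO yO yT : R).
Hypotheses (alpha_gt0 : 0 < alpha) (alpha_lt1 : alpha < 1) (r_gt0 : 0 < r).

Definition heading_then_north (tau th : R) (u : R) : R :=
  if u <= tau then th else pi / 2.

Lemma admissible_heading_then_north (tau th : R) :
  admissible (heading_then_north tau th).
Proof.
apply: (measurable_funS (E := setT)) => //.
by apply: measurable_fun_ifT => //; apply: measurable_fun_ler.
Qed.

Lemma obsX_heading_then_north (tau th t : R) : 0 <= tau -> 0 <= t ->
  obsX alpha xO (heading_then_north tau th) t =
  xO + (if t <= tau then alpha * cos th * t else alpha * cos th * tau).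
Proof.
move=> tau0 t0; rewrite /obsX.
rewrite (_ : (fun s => _) = fun s => if s <= tau then alpha * cos th else 0).
  by rewrite Rintegral_step //; case: ifP; rewrite ?mul0r ?addr0.
by apply: funext => u; rewrite /heading_then_north; case: ifP; rewrite ?cos_pihalf ?mulr0.
Qed.

Lemma obsY_heading_then_north (tau th t : R) : 0 <= tau -> 0 <= t ->
  obsY alpha yO (heading_then_north tau th) t =
  yO + (if t <= tau then alpha * sin th * t
        else alpha * sin th * tau + alpha * (t - tau)).
Proof.
move=> tau0 t0; rewrite /obsY.
rewrite (_ : (fun s => _) = fun s => if s <= tau then alpha * sin th else alpha).
  by rewrite Rintegral_step.
by apply: funext => u; rewrite /heading_then_north; case: ifP; rewrite ?sin_pihalf ?mulr1.
Qed.

Lemma obs_time_heading_then_north (tau th kap : R) : 0 <= tau -> 0 <= kap ->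
  alpha * cos th * tau = - xO -> sin th = alpha ->
  yO - yT - (1 - alpha ^+ 2) * tau - (1 - alpha) * kap = r ->
  ((2 * r / (1 - alpha))%:E <= obs_time alpha r xO yO yT (heading_then_north tau th))%E.
Proof.
move=> tau0 kap0 reach_axis sin_th contact.
set psi := heading_then_north tau th; set ts := tau + kap.
have alpha_lt1' : 0 < 1 - alpha by rewrite subr_gt0.
have on_axis t : ts <= t -> obsX alpha xO psi t = 0 /\
    obsY alpha yO psi t - targY yT t = r - (1 - alpha) * (t - ts).
  move=> ts_t; have tau_t : tau <= t by rewrite (le_trans _ ts_t) // lerDl.
  rewrite obsX_heading_then_north ?obsY_heading_then_north ?(le_trans tau0) //.
  rewrite /targY sin_th /ts; case: (leP t tau) => [t_tau|_]; last by split; [lra|nra].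
  have -> : t = tau by apply/le_anti; rewrite t_tau.
  by split; [lra|nra].
have above_disk t : 0 <= t -> t < ts -> r < obsY alpha yO psi t - targY yT t.
  move=> t0 t_ts; have gap : 0 < (1 - alpha) * (ts - t) by rewrite mulr_gt0 ?subr_gt0.
  rewrite /ts in gap; rewrite obsY_heading_then_north // /targY sin_th.
  case: (leP t tau) => t_tau; last by nra.
  have : 0 <= alpha * ((1 - alpha) * (tau - t)).
    by apply: mulr_ge0 (ltW alpha_gt0) (mulr_ge0 _ _); rewrite subr_ge0 // ltW.
  nra.
apply: (obs_time_ge (ts := ts)) => [||t t0 t_ts|t /andP[ts_t t_le]].
- exact: addr_ge0.
- rewrite /in_disk; have [-> ->] := on_axis ts (lexx ts); lra.
- move=> /(normr_le_of_sqrD_le (ltW r_gt0)) /ler_normlW.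
  by rewrite leNgt above_disk.
- rewrite /in_disk; have [-> ->] := on_axis t ts_t.
  have u_le : (1 - alpha) * (t - ts) <= 2 * r.
    by rewrite mulrC -ler_pdivlMr // lerBlDl.
  have u_ge0 : 0 <= (1 - alpha) * (t - ts) by rewrite mulr_ge0 ?subr_ge0 // ltW.
  nra.
Qed.

Lemma exists_admissible_obs_time_ge :
  Num.sqrt (1 - alpha ^+ 2) / alpha * `|xO| <= yO - r - yT ->
  exists2 psi, admissible psi &
    ((2 * r / (1 - alpha))%:E <= obs_time alpha r xO yO yT psi)%E.
Proof.
move=> ahead; set q := Num.sqrt (1 - alpha ^+ 2).
have alpha_lt1' : 0 < 1 - alpha by rewrite subr_gt0.
have alpha2_lt1 : 0 < 1 - alpha ^+ 2 by rewrite subr_gt0 expr_lt1 // ltW.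
have q_gt0 : 0 < q by rewrite sqrtr_gt0.
have qq : q ^+ 2 = 1 - alpha ^+ 2 by rewrite sqr_sqrtr // ltW.
set tau := `|xO| / (alpha * q).
set kap := (yO - r - yT - q / alpha * `|xO|) / (1 - alpha).
have heading_unit : (if 0 <= xO then - q else q) ^+ 2 + alpha ^+ 2 = 1.
  by case: ifP; rewrite ?sqrrN qq subrK.
have [th [cos_th sin_th]] := exists_cos_sin heading_unit (ltW alpha_gt0).
exists (heading_then_north tau th); first exact: admissible_heading_then_north.
apply: (obs_time_heading_then_north (kap := kap)) => //.
- by rewrite /tau divr_ge0 // ltW // mulr_gt0.
- by rewrite /kap divr_ge0 ?subr_ge0 // ltW.
- rewrite cos_th /tau; case: (lerP 0 xO) => xO0.
    by rewrite ger0_norm //; field; rewrite ?gt_eqF.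
  by rewrite ltr0_norm //; field; rewrite ?gt_eqF.
- by rewrite /kap /tau -qq; field; rewrite ?gt_eqF.
Qed.

End NorthboundStrategy.

Theorem lemma7 (R : realType) (alpha r xO yO yT : R) :
  0 < alpha -> alpha < 1 -> 0 < r ->
  let m := Num.sqrt (1 - alpha ^+ 2) / alpha in
  m * `|xO| <= yO - r - yT ->
  optimal_obs_time alpha r xO yO yT = ((2 * r) / (1 - alpha))%:E.
Proof.
move=> alpha_gt0 alpha_lt1 r_gt0 m ahead; apply/eqP; rewrite eq_le; apply/andP; split.
  apply: ge_ereal_sup => _ [psi psi_meas <-].
  exact: obs_time_le_crossing.
have [psi psi_meas obs_ge] := exists_admissible_obs_time_ge alpha_gt0 alpha_lt1 r_gt0 ahead.
by apply: le_trans obs_ge _; apply: ereal_sup_ubound; exists psi.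
Qed.
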